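(* Let $r\ge 2$ and $n=3(r-1)$. Then there exist an $n$-partite quantum state, two two-outcome measurements for each party, and a linear output-input post-selection (functions $g_j(\mathbf{x},\mathbf{m}^{\setminus j})$) such that the post-selected correlator satisfies $p(1|\mathbf{x})=\delta^1_{f(\mathbf{x})}$ for all $\mathbf{x}\in\{0,1\}^r$, where $f(\mathbf{x})=\prod_{k=1}^r x_k$; i.e. this vertex of $\mathcal{P}_{\mathbf{x}}$ belongs to $\mathcal{Q}^n_{\mathbf{x},\mathbf{m}}$.
   Context: $(n,2,2)$ quantum Bell scenario: parties share a state $\rho$ on $\mathcal{H}_1\otimes\cdots\otimes\mathcal{H}_n$; party $j$ gets input $s_j\in\{0,1\}$, chosen uniformly and independently of everything else, performs a two-outcome POVM depending on $s_j$ and outputs $m_j\in\{0,1\}$, with $p(\mathbf{m}|\mathbf{s})=\mathrm{Tr}[\rho\bigotimes_j E^{(j)}_{m_j|s_j}]$. An experimenter holds $\mathbf{x}\in\{0,1\}^r$. Linear output-input post-selection: fix, for each $j$, a linear Boolean function $g_j$ (of the form $\bigoplus a_k y_k\oplus b$) of the bits of $\mathbf{x}$ and of $\mathbf{m}^{\setminus j}=(m_i)_{i\ne j}$; the post-selected correlator is $p(1|\mathbf{x})=\Pr[\bigoplus_j m_j=1\mid s_j=g_j(\mathbf{x},\mathbf{m}^{\setminus j})\ \forall j]$. $\mathcal{P}_{\mathbf{x}}$ is the convex hull of vectors $(\delta^1_{F(\mathbf{x})})_{\mathbf{x}}$ over all Boolean $F$, and $\mathcal{Q}^n_{\mathbf{x},\mathbf{m}}$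 is the set of post-selected quantum correlator vectors obtainable with $n$ parties and such post-selections. *)

From HB Require Import structures.
From mathcomp Require Import all_boot all_order all_algebra algC.
Set Implicit Arguments. Unset Strict Implicit. Unset Printing Implicit Defensive.
Import Order.TTheory GRing.Theory Num.Theory.
Local Open Scope ring_scope.

(* Computational basis of (C^d)^{\otimes n}: tuples of local basis indices. *)
Definition basis (n d : nat) := {ffun 'I_n -> 'I_d}.

Definition op (n d : nat) := 'M[algC]_(#|{: basis n d}|).

Definition tens (n d : nat) (E : 'I_n -> 'M[algC]_d) : op n d :=
  \matrix_(i, k) \prod_(j < n) E j ((enum_val i : basis n d) j) ((enum_val k : basis n d) j).

Definition psd (N : nat) (A : 'M[algC]_N) : Prop :=
  forall v : 'cV[algC]_N, 0 <= ((map_mx (fun z => z^*) v)^T *m A *m v) 0 0.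

Definition density (n d : nat) (rho : op n d) : Prop :=
  psd rho /\ \tr rho = 1.

(* A family of local measurements: E s m is the POVM element for outcome m
   given input s; two two-outcome POVMs (s = false/true). *)
Definition two_povms (d : nat) (E : bool -> bool -> 'M[algC]_d) : Prop :=
  (forall s m, psd (E s m)) /\ (forall s, E s false + E s true = 1%:M).

Definition qprob (n d : nat) (rho : op n d)
    (E : 'I_n -> bool -> bool -> 'M[algC]_d)
    (m s : {ffun 'I_n -> bool}) : algC :=
  \tr (rho *m tens (fun j => E j (s j) (m j))).

Definition linpost (r n : nat) (a : 'I_n -> 'I_r -> bool)
    (c : 'I_n -> 'I_n -> bool) (b : 'I_n -> bool)
    (j : 'I_n) (x : {ffun 'I_r -> bool}) (m : {ffun 'I_n -> bool}) : bool :=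
  (\big[addb/false]_(k < r) (a j k && x k))
  (+) (\big[addb/false]_(i < n | i != j) (c j i && m i))
  (+) b j.

(* Probability (inputs uniform and independent) of the post-selection event
   {s_j = g_j(x, m^{\j}) for all j} intersected with the event P on outputs. *)
Definition postprob (r n d : nat) (rho : op n d)
    (E : 'I_n -> bool -> bool -> 'M[algC]_d)
    (g : 'I_n -> {ffun 'I_r -> bool} -> {ffun 'I_n -> bool} -> bool)
    (x : {ffun 'I_r -> bool}) (P : {ffun 'I_n -> bool} -> bool) : algC :=
  \sum_(s : {ffun 'I_n -> bool})
   \sum_(m : {ffun 'I_n -> bool} | [forall j, s j == g j x m] && P m)
     (2 ^- n) * qprob rho E m s.

Definition parity (n : nat) (m : {ffun 'I_n -> bool}) : bool :=
  \big[addb/false]_(j < n) m j.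

Definition postcorr (r n d : nat) (rho : op n d)
    (E : 'I_n -> bool -> bool -> 'M[algC]_d)
    (g : 'I_n -> {ffun 'I_r -> bool} -> {ffun 'I_n -> bool} -> bool)
    (x : {ffun 'I_r -> bool}) : algC :=
  postprob rho E g x (fun m => parity m) / postprob rho E g x (fun _ => true).

Definition delta1 (b : bool) : algC := if b then 1 else 0.

Definition andall (r : nat) (x : {ffun 'I_r -> bool}) : bool :=
  [forall k, x k].

From mathcomp Require Import all_boot all_order all_algebra algC zify.
Set Implicit Arguments. Unset Strict Implicit. Unset Printing Implicit Defensive.
Import Order.TTheory GRing.Theory Num.Theory.
Local Open Scope ring_scope.

(* A classical strategy suffices: the parties share a uniformly random
   l in {0, ..., r} (a diagonal state) and answer deterministically.  With the
   post-selection s_j = x_j + sum_(i != j) m_i (x_j := 0 for j >= r), party j is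
   consistent with its output iff m_j = resp_j(l, x_j + P + m_j), P being the
   parity of all outputs.  For l = 0 the first r parties copy their input and the
   others negate it, which is consistent only if P = 1 and every x_j = 1; for
   l = k + 1 parties k and r copy their input and the others answer 0, which is
   consistent only if P = 0 and x_k = 0.  So every post-selected outcome has
   parity prod_k x_k, and for each x some outcome is post-selected. *)

Lemma psd_diag_mx (N : nat) (w : 'rV[algC]_N) :
  (forall i, 0 <= w 0 i) -> psd (diag_mx w).
Proof.
move=> w_ge0 v; rewrite mul_mx_diag !mxE; apply: sumr_ge0 => i _.
rewrite !mxE [_ * v i 0]mulrC mulrA.
exact: mulr_ge0 (mul_conjC_ge0 _) (w_ge0 i).
Qed.

Lemma mxtrace_diag_mul (N : nat) (w : 'rV[algC]_N) (A : 'M_N) :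
  \tr (diag_mx w *m A) = \sum_i w 0 i * A i i.
Proof. by rewrite mul_diag_mx; apply: eq_bigr => i _; rewrite mxE. Qed.

Lemma sum_enum_val (T : finType) (F : T -> algC) :
  \sum_(i < #|{: T}|) F (enum_val i) = \sum_t F t.
Proof. exact: (esym (big_enum_val (A := predT) F)). Qed.

Lemma prod_nat_bool (R : comPzSemiRingType) (I : finType) (P : pred I) :
  \prod_i (P i)%:R = [forall i, P i]%:R :> R.
Proof.
case: (boolP [forall i, P i]) => [/forallP allP | /forallPn [i /negbTE Pi]].
  by rewrite big1 // => i _; rewrite allP.
by rewrite (bigD1 i) //= Pi mul0r.
Qed.

Local Notation bits k := {ffun 'I_k -> bool}.

Section PostSelection.

Variables (r n d : nat) (rho : op n d) (E : 'I_n -> bool -> bool -> 'M[algC]_d).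
Variables (g : 'I_n -> bits r -> bits n -> bool).
Variable x : bits r.

Lemma postprob_ge_term (P : pred (bits n)) (m s : bits n) :
  (forall m' s' : bits n, 0 <= qprob rho E m' s') -> [forall j, s j == g j x m] -> P m ->
  2 ^- n * qprob rho E m s <= postprob rho E g x P.
Proof.
move=> qprob_ge0 sel Pm; have term_ge0 m' s' : 0 <= 2 ^- n * qprob rho E m' s'.
  by rewrite mulr_ge0 ?invr_ge0 ?exprn_ge0.
rewrite /postprob (bigD1 s) //= (bigD1 m) /=; last by rewrite sel Pm.
rewrite -addrA lerDl addr_ge0 //.
  exact: sumr_ge0.
by apply: sumr_ge0 => s' _; exact: sumr_ge0.
Qed.

Lemma postprob_const_parity (v : bool) :
  (forall m s : bits n, [forall j, s j == g j x m] -> qprob rho E m s != 0 -> parity m = v) ->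
  postprob rho E g x (fun m => parity m) = delta1 v * postprob rho E g x (fun _ => true).
Proof.
move=> parity_const; rewrite /postprob mulr_sumr; apply: eq_bigr => s _.
rewrite mulr_sumr big_mkcond [RHS]big_mkcond; apply: eq_bigr => m _ /=.
rewrite andbT; have [sel /= | _] := boolP [forall j, s j == g j x m]; last by [].
have [-> | q_neq0] := eqVneq (qprob rho E m s) 0; first by rewrite !mulr0 if_same.
rewrite (parity_const m s sel q_neq0).
by case: v parity_const => _; rewrite ?mul1r ?mul0r.
Qed.

End PostSelection.

Section SharedRandomness.

Variables n d : nat.

Definition const_basis (l : 'I_d) : basis n d := [ffun=> l].

(* The state (1/d) sum_l |l ... l><l ... l|. *)
Definition shared_randomness : op n d :=
  diag_mx (\row_i \sum_(l : 'I_d) (enum_val i == const_basis l)%:R / d%:R).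

Definition det_povm (resp : 'I_d -> bool -> bool) (s m : bool) : 'M[algC]_d :=
  diag_mx (\row_l (resp l s == m)%:R).

Lemma density_shared_randomness : (0 < d)%N -> density shared_randomness.
Proof.
move=> d_gt0; split.
  apply: psd_diag_mx => i; rewrite mxE; apply: sumr_ge0 => l _.
  by rewrite divr_ge0 ?ler0n.
rewrite /mxtrace; under eq_bigr => i _ do rewrite !mxE eqxx mulr1n.
rewrite (sum_enum_val (fun f => \sum_l (f == const_basis l)%:R / d%:R)).
rewrite exchange_big /=; under eq_bigr => l _.
  rewrite (bigD1 (const_basis l)) //= eqxx mul1r big1 ?addr0; last first.
    by move=> f /negbTE ->; rewrite mul0r.
  over.
by rewrite sumr_const card_ord -[_ *+ d]mulr_natr mulVf // pnatr_eq0 -lt0n.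
Qed.

Lemma two_povms_det_povm resp : two_povms (det_povm resp).
Proof.
split=> [s m | s]; first by apply: psd_diag_mx => l; rewrite mxE ler0n.
apply/matrixP => u v; rewrite !mxE.
by case: (u == v); case: (resp u s); rewrite ?addr0 ?add0r.
Qed.

Lemma det_povm_diag resp s m l : det_povm resp s m l l = (resp l s == m)%:R.
Proof. by rewrite !mxE eqxx mulr1n. Qed.

Variable resp : 'I_n -> 'I_d -> bool -> bool.

Local Notation E := (fun j => det_povm (resp j)).

Definition responds (l : 'I_d) (m s : bits n) : bool :=
  [forall j, resp j l (s j) == m j].

Definition consistent r (g : 'I_n -> bits r -> bits n -> bool) (l : 'I_d)
    (x : bits r) (m : bits n) :=
  forall j, resp j l (g j x m) = m j.

Lemma qprob_shared_randomness (m s : bits n) :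
  qprob shared_randomness E m s = \sum_l d%:R^-1 * (responds l m s)%:R.
Proof.
rewrite /qprob mxtrace_diag_mul.
under eq_bigr => i _ do rewrite !mxE.
under eq_bigr => i _ do rewrite (eq_bigr _ (fun j _ => det_povm_diag (resp j) (s j) (m j) _)).
rewrite (sum_enum_val (fun f => (\sum_l (f == const_basis l)%:R / d%:R) *
                                 \prod_j (resp j (f j) (s j) == m j)%:R)).
under eq_bigr => f _ do rewrite mulr_suml.
rewrite exchange_big /=; apply: eq_bigr => l _.
rewrite (bigD1 (const_basis l)) //= eqxx mul1r [X in _ + X]big1 ?addr0; last first.
  by move=> f /negbTE ->; rewrite !mul0r.
by rewrite prod_nat_bool; congr (_ * (_ _)%:R); apply: eq_forallb => j; rewrite ffunE.
Qed.

Lemma qprob_shared_randomness_ge0 (m s : bits n) : 0 <= qprob shared_randomness E m s.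
Proof.
rewrite qprob_shared_randomness; apply: sumr_ge0 => l _.
by rewrite mulr_ge0 ?invr_ge0 ?ler0n.
Qed.

Lemma qprob_shared_randomness_eq0 (m s : bits n) :
  (qprob shared_randomness E m s == 0) = ~~ [exists l, responds l m s].
Proof.
rewrite qprob_shared_randomness; apply/eqP/existsPn => [sum0 l | none]; last first.
  by rewrite big1 // => l _; rewrite (negbTE (none l)) mulr0.
have d_gt0 : (0 < d)%N by apply: leq_ltn_trans (ltn_ord l).
have term_ge0 l' : 0 <= d%:R^-1 * (responds l' m s)%:R :> algC.
  by rewrite mulr_ge0 ?invr_ge0 ?ler0n.
move/psumr_eq0P: sum0 => /(_ (fun l' _ => term_ge0 l') l isT) /eqP.
by rewrite mulf_eq0 invr_eq0 pnatr_eq0 eqn0Ngt d_gt0 pnatr_eq0 eqb0.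
Qed.

Lemma postcorr_shared_randomness r (g : 'I_n -> bits r -> bits n -> bool)
    (x : bits r) (v : bool) :
  (exists l m, consistent g l x m) ->
  (forall l m, consistent g l x m -> parity m = v) ->
  postprob shared_randomness E g x (fun _ => true) != 0 /\
  postcorr shared_randomness E g x = delta1 v.
Proof.
move=> [l [m consistent]] parity_const.
pose s : bits n := [ffun j => g j x m].
have sel : [forall j, s j == g j x m] by apply/forallP => j; rewrite ffunE.
have q_gt0 : 0 < qprob shared_randomness E m s.
  rewrite lt_def qprob_shared_randomness_eq0 qprob_shared_randomness_ge0 negbK andbT.
  by apply/existsP; exists l; apply/forallP => j; rewrite ffunE consistent.
have denom_gt0 : 0 < postprob shared_randomness E g x (fun _ => true).
  apply: lt_le_trans (postprob_ge_term qprob_shared_randomness_ge0 sel (isT : xpredT m)).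
  by rewrite mulr_gt0 ?invr_gt0 ?exprn_gt0.
split; first by rewrite gt_eqF.
rewrite /postcorr (postprob_const_parity (v := v)).
  by rewrite mulfK ?gt_eqF.
move=> m' s' sel'; rewrite qprob_shared_randomness_eq0 negbK.
case/existsP=> l' /forallP resp_l'; apply: (parity_const l') => j.
by have /eqP := resp_l' j; move/forallP: sel' => /(_ j) /eqP <-.
Qed.

End SharedRandomness.

Lemma parity_ffun0 n : parity [ffun _ : 'I_n => false] = false.
Proof. by rewrite /parity big1 // => i _; rewrite ffunE. Qed.

Lemma parity_ffun1 n (i : 'I_n) : parity [ffun j => j == i] = true.
Proof.
rewrite /parity (bigD1 i) //= ffunE eqxx big1 // => j /negbTE.
by rewrite ffunE.
Qed.

Lemma xor_others_parity n (m : bits n) (j : 'I_n) :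
  \big[addb/false]_(i < n | i != j) m i = parity m (+) m j.
Proof. by rewrite /parity [in RHS](bigD1 j) //= addbC addbA addbb. Qed.

Section AndGate.

Variables r n : nat.

Definition and_coef (j : 'I_n) (k : 'I_r) : bool := val j == val k.

Definition and_post := linpost and_coef (fun _ _ => true) (fun _ => false).

Lemma and_post_lt (k : 'I_r) (j : 'I_n) x m :
  val j = val k -> and_post j x m = x k (+) parity m (+) m j.
Proof.
move=> jk; rewrite /and_post /linpost addbF xor_others_parity addbA.
rewrite (bigD1 k) //= /and_coef jk eqxx big1 ?addbF // => i ik.
by rewrite (inj_eq val_inj) eq_sym (negbTE ik).
Qed.

Lemma and_post_ge (j : 'I_n) x m :
  (r <= val j)%N -> and_post j x m = parity m (+) m j.
Proof.
move=> r_le_j; rewrite /and_post /linpost addbF xor_others_parity big1 // => k _.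
by rewrite /and_coef gtn_eqF // (leq_trans (ltn_ord k) r_le_j).
Qed.

Definition and_resp (j : 'I_n) (l : 'I_r.+1) (s : bool) : bool :=
  if l == ord0 then (if (val j < r)%N then s else ~~ s)
  else if (val j == l.-1) || (val j == r) then s else false.

Definition and_consistent := consistent and_resp and_post.

Hypothesis r_lt_n : (r < n)%N.

Let last_party : 'I_n := Ordinal r_lt_n.
Let party (k : 'I_r) : 'I_n := widen_ord (ltnW r_lt_n) k.

Lemma and_consistent_ord0 x m : and_consistent ord0 x m -> parity m /\ andall x.
Proof.
move=> cons.
have parity1 : parity m.
  have := cons last_party; rewrite /and_resp eqxx /= ltnn and_post_ge //=.
  by case: (parity m); case: (m _).
split=> //; apply/forallP => k.
have := cons (party k); rewrite /and_resp eqxx /= ltn_ord (and_post_lt (k := k)) //.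
by rewrite parity1; case: (x k); case: (m _).
Qed.

Lemma and_consistent_lift (k : 'I_r) x m :
  and_consistent (lift ord0 k) x m -> ~~ parity m /\ ~~ x k.
Proof.
move=> cons; have lift_neq0 : (lift ord0 k == ord0) = false.
  by rewrite eq_sym (negbTE (neq_lift _ _)).
have parity0 : ~~ parity m.
  have := cons last_party; rewrite /and_resp lift_neq0 /= eqxx orbT and_post_ge //=.
  by case: (parity m); case: (m _).
split=> //; have := cons (party k).
rewrite /and_resp lift_neq0 lift0 /= eqxx /= (and_post_lt (k := k)) //.
by move: parity0; case: (parity m); case: (x k); case: (m _).
Qed.

Lemma and_consistent_parity l x m : and_consistent l x m -> parity m = andall x.
Proof.
case: (unliftP ord0 l) => [k -> | ->]; last by case/and_consistent_ord0 => -> ->.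
case/and_consistent_lift => /negbTE -> xk.
by apply/esym/negbTE/forallPn; exists k.
Qed.

Lemma and_consistent_exists x : exists l m, and_consistent l x m.
Proof.
have [all_x | /forallPn [k xk]] := boolP (andall x).
  exists ord0, [ffun j => j == last_party] => j.
  rewrite /and_resp eqxx ffunE; case: ltnP => j_r.
    rewrite (and_post_lt (k := Ordinal j_r)) // parity_ffun1 ffunE (forallP all_x).
    by case: (_ == _).
  by rewrite and_post_ge // parity_ffun1 ffunE; case: (_ == _).
exists (lift ord0 k), [ffun=> false] => j.
rewrite /and_resp eq_sym (negbTE (neq_lift _ _)) lift0 succnK ffunE.
have [jk | j_ne_k] := eqVneq (val j) k.
  by rewrite (and_post_lt _ _ jk) parity_ffun0 ffunE (negbTE xk).
rewrite orFb; case: eqP => // j_r.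
by rewrite (and_post_ge _ _ (eq_leq (esym j_r))) parity_ffun0 ffunE.
Qed.

End AndGate.

Theorem lemma4p2p1 (r : nat) (hr : (2 <= r)%N) :
  let n := (3 * (r - 1))%N in
  exists (d : nat) (rho : op n d) (E : 'I_n -> bool -> bool -> 'M[algC]_d)
         (a : 'I_n -> 'I_r -> bool) (c : 'I_n -> 'I_n -> bool) (b : 'I_n -> bool),
    (0 < d)%N /\ density rho /\ (forall j, two_povms (E j)) /\
    forall x : {ffun 'I_r -> bool},
      postprob rho E (linpost a c b) x (fun _ => true) != 0 /\
      postcorr rho E (linpost a c b) x = delta1 (andall x).
Proof.
move=> n; have r_lt_n : (r < n)%N by rewrite /n; lia.
exists r.+1, (shared_randomness n r.+1), (fun j => det_povm (@and_resp r n j)).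
exists (@and_coef r n), (fun _ _ => true), (fun _ => false).
split=> //; split; first exact: density_shared_randomness.
split=> [j | x]; first exact: two_povms_det_povm.
apply: postcorr_shared_randomness.
  exact: and_consistent_exists r_lt_n x.
move=> l m; exact: (and_consistent_parity r_lt_n (x := x)).
Qed.
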